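(* Let $a,b,c\in\mathbb{R}$ be such that $$B=\begin{pmatrix}1&a&b\\ a&1&c\\ b&c&1\end{pmatrix}$$ is positive semidefinite. Put $$c_-=ab-\sqrt{(1-a^2)(1-b^2)},\qquad c_+=ab+\sqrt{(1-a^2)(1-b^2)},$$ $$\Delta_{a,b}=\max\{\sqrt{1-c_-^2},\sqrt{1-c_+^2}\},\qquad \delta_{a,b}=\min\{\sqrt{1-c_-^2},\sqrt{1-c_+^2}\}.$$ (i) If $f$ is a function on $[c_-,c_+]$ with $\delta_{a,b}\le f(x)$ for all $x\in[c_-,c_+]$, then $|a^2-b^2|\le\Delta_{a,b}f(x)$ for all $x\in[c_-,c_+]$. In particular, $|a^2-b^2|\le\Delta_{a,b}\sqrt{1-c^2}$. (ii) If $g$ is a function on $[c_-,c_+]$ with $\sqrt{1-c_+}\le g(x)$ for all $x\in[c_-,c_+]$, then $|a-b|\le\sqrt{1-c_-}\,g(x)$ for all $x\in[c_-,c_+]$. In particular, $|a-b|\le\sqrt{1-c_-}\,\sqrt{1-c}$. (iii) If moreover $a,b,c\in[0,1]$, then $|a-b|\le\sqrt{1-c^2}$. *)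

From Stdlib Require Import Reals.
Open Scope R_scope.

Definition Bmat (a b c : R) (i j : nat) : R :=
  match i, j with
  | 0, 1 | 1, 0 => a
  | 0, 2 | 2, 0 => b
  | 1, 2 | 2, 1 => c
  | _, _ => 1
  end.

Definition psd3 (a b c : R) : Prop :=
  forall v : nat -> R,
    0 <= sum_f_R0 (fun i => sum_f_R0 (fun j => v i * Bmat a b c i j * v j) 2) 2.

Definition c_minus (a b : R) : R := a * b - sqrt ((1 - a ^ 2) * (1 - b ^ 2)).
Definition c_plus (a b : R) : R := a * b + sqrt ((1 - a ^ 2) * (1 - b ^ 2)).

Definition Delta_ab (a b : R) : R :=
  Rmax (sqrt (1 - c_minus a b ^ 2)) (sqrt (1 - c_plus a b ^ 2)).
Definition delta_ab (a b : R) : R :=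
  Rmin (sqrt (1 - c_minus a b ^ 2)) (sqrt (1 - c_plus a b ^ 2)).

(* Writing r = sqrt((1-a^2)(1-b^2)), so that c_(+/-) = ab +/- r, positive
   semidefiniteness of B gives a^2, b^2 <= 1 and
   det B = (1-a^2)(1-b^2) - (c-ab)^2 >= 0, i.e. c lies in [c_-, c_+].
   Eliminating r^2 gives the two identities
     (1 - c_-^2)(1 - c_+^2) = (a^2 - b^2)^2   and   (1 - c_-)(1 - c_+) = (a - b)^2,
   so Delta * delta = |a^2 - b^2| and |a - b| = sqrt(1 - c_-) sqrt(1 - c_+);
   (i) and (ii) follow by bounding the smaller factor, and (iii) is
   1 - c^2 - (a-b)^2 = det B + 2ab(1-c) >= 0. *)
From Stdlib Require Import Reals Lra Psatz.
Open Scope R_scope.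

Lemma nonneg_of_mul_add_nonneg (x y : R) :
  0 <= x * y -> 0 <= x + y -> 0 <= x /\ 0 <= y.
Proof. intros Hxy Hs; split; nra. Qed.

Lemma Rmax_mul_Rmin (x y : R) : Rmax x y * Rmin x y = x * y.
Proof. unfold Rmax, Rmin; destruct Rle_dec; ring. Qed.

Lemma sqrt_pow2_abs (x : R) : sqrt (x ^ 2) = Rabs x.
Proof. rewrite <- pow2_abs; apply sqrt_pow2, Rabs_pos. Qed.

Lemma Rmin_sqrt_one_sub_sq_le (u v x : R) :
  u <= x <= v -> Rmin (sqrt (1 - u ^ 2)) (sqrt (1 - v ^ 2)) <= sqrt (1 - x ^ 2).
Proof.
  intros [Hux Hxv]; destruct (Rle_dec 0 x) as [Hx | Hx].
  - eapply Rle_trans; [apply Rmin_r |]; apply sqrt_le_1_alt; nra.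
  - eapply Rle_trans; [apply Rmin_l |]; apply sqrt_le_1_alt; nra.
Qed.

Section CorrelationBounds.

Variables a b : R.
Hypothesis Ha : a ^ 2 <= 1.
Hypothesis Hb : b ^ 2 <= 1.

Lemma sqrt_one_sub_sq_prod_sq :
  sqrt ((1 - a ^ 2) * (1 - b ^ 2)) ^ 2 = (1 - a ^ 2) * (1 - b ^ 2).
Proof. apply pow2_sqrt; apply Rmult_le_pos; lra. Qed.

Lemma between_c_minus_c_plus (x : R) :
  (x - a * b) ^ 2 <= (1 - a ^ 2) * (1 - b ^ 2) -> c_minus a b <= x <= c_plus a b.
Proof.
  intros Hx; pose proof sqrt_one_sub_sq_prod_sq as Hr.
  unfold c_minus, c_plus; set (r := sqrt _) in *.
  assert (0 <= r) by apply sqrt_pos.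
  split; nra.
Qed.

Lemma one_sub_sq_c_minus_mul_c_plus :
  (1 - c_minus a b ^ 2) * (1 - c_plus a b ^ 2) = (a ^ 2 - b ^ 2) ^ 2.
Proof.
  pose proof sqrt_one_sub_sq_prod_sq as Hr.
  unfold c_minus, c_plus; set (r := sqrt _) in *.
  replace ((1 - (a * b - r) ^ 2) * (1 - (a * b + r) ^ 2))
    with ((1 - (a * b) ^ 2 - r ^ 2) ^ 2 - 4 * (a * b) ^ 2 * r ^ 2) by ring.
  rewrite Hr; ring.
Qed.

Lemma one_sub_sq_c_minus_c_plus_ge0 :
  0 <= 1 - c_minus a b ^ 2 /\ 0 <= 1 - c_plus a b ^ 2.
Proof.
  apply nonneg_of_mul_add_nonneg.
  - rewrite one_sub_sq_c_minus_mul_c_plus; apply pow2_ge_0.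
  - pose proof sqrt_one_sub_sq_prod_sq as Hr.
    unfold c_minus, c_plus; set (r := sqrt _) in *.
    replace (1 - (a * b - r) ^ 2 + (1 - (a * b + r) ^ 2))
      with (2 - 2 * (a * b) ^ 2 - 2 * r ^ 2) by ring.
    rewrite Hr; nra.
Qed.

Lemma Delta_ab_mul_delta_ab : Delta_ab a b * delta_ab a b = Rabs (a ^ 2 - b ^ 2).
Proof.
  destruct one_sub_sq_c_minus_c_plus_ge0 as [Hm Hp].
  unfold Delta_ab, delta_ab.
  rewrite Rmax_mul_Rmin, <- sqrt_mult by assumption.
  rewrite one_sub_sq_c_minus_mul_c_plus; apply sqrt_pow2_abs.
Qed.

Lemma one_sub_c_minus_mul_c_plus :
  (1 - c_minus a b) * (1 - c_plus a b) = (a - b) ^ 2.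
Proof.
  pose proof sqrt_one_sub_sq_prod_sq as Hr.
  unfold c_minus, c_plus; set (r := sqrt _) in *.
  replace ((1 - (a * b - r)) * (1 - (a * b + r))) with ((1 - a * b) ^ 2 - r ^ 2) by ring.
  rewrite Hr; ring.
Qed.

Lemma one_sub_c_minus_c_plus_ge0 : 0 <= 1 - c_minus a b /\ 0 <= 1 - c_plus a b.
Proof.
  apply nonneg_of_mul_add_nonneg.
  - rewrite one_sub_c_minus_mul_c_plus; apply pow2_ge_0.
  - unfold c_minus, c_plus; nra.
Qed.

Lemma Rabs_sub_eq_sqrt_mul :
  Rabs (a - b) = sqrt (1 - c_minus a b) * sqrt (1 - c_plus a b).
Proof.
  destruct one_sub_c_minus_c_plus_ge0 as [Hm Hp].
  rewrite <- sqrt_mult, one_sub_c_minus_mul_c_plus by assumption.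
  symmetry; apply sqrt_pow2_abs.
Qed.

End CorrelationBounds.

Lemma Delta_ab_ge0 (a b : R) : 0 <= Delta_ab a b.
Proof. unfold Delta_ab; eapply Rle_trans; [apply sqrt_pos | apply Rmax_l]. Qed.

Lemma psd3_quad_form (a b c : R) : psd3 a b c -> forall x y z : R,
  0 <= x * x + y * y + z * z + 2 * a * x * y + 2 * b * x * z + 2 * c * y * z.
Proof.
  intros HB x y z.
  specialize (HB (fun i => match i with 0%nat => x | 1%nat => y | _ => z end)).
  simpl in HB; nra.
Qed.

Section Psd3.

Variables a b c : R.
Hypothesis HB : psd3 a b c.

Lemma psd3_a_sq_le_1 : a ^ 2 <= 1.
Proof. pose proof (psd3_quad_form _ _ _ HB 1 (- a) 0); nra. Qed.

Lemma psd3_b_sq_le_1 : b ^ 2 <= 1.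
Proof. pose proof (psd3_quad_form _ _ _ HB 1 0 (- b)); nra. Qed.

Lemma psd3_det_ge0 : 0 <= 1 + 2 * a * b * c - a ^ 2 - b ^ 2 - c ^ 2.
Proof.
  set (d := 1 + 2 * a * b * c - a ^ 2 - b ^ 2 - c ^ 2).
  (* At (ac - b, ab - c, 1 - a^2 - d) the form equals d (1 - a^2) - d^2,
     which is negative whenever d < 0. *)
  pose proof (psd3_quad_form _ _ _ HB (a * c - b) (a * b - c) (1 - a ^ 2 - d)) as Q.
  replace (_ + _) with (d * (1 - a ^ 2) - d * d) in Q by (unfold d; ring).
  pose proof psd3_a_sq_le_1; nra.
Qed.

Lemma psd3_between_c_minus_c_plus : c_minus a b <= c <= c_plus a b.
Proof.
  apply between_c_minus_c_plus; [apply psd3_a_sq_le_1 | apply psd3_b_sq_le_1 |].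
  pose proof psd3_det_ge0; nra.
Qed.

Lemma psd3_Rabs_sub_le (Ha : 0 <= a) (Hb : 0 <= b) (Hc : c <= 1) :
  Rabs (a - b) <= sqrt (1 - c ^ 2).
Proof.
  rewrite <- sqrt_pow2_abs; apply sqrt_le_1_alt.
  assert (0 <= a * b * (1 - c)) by (apply Rmult_le_pos; [apply Rmult_le_pos |]; lra).
  pose proof psd3_det_ge0; nra.
Qed.

End Psd3.

Theorem theorem2 (a b c : R) (HB : psd3 a b c) :
  (* (i) *)
  (forall f : R -> R,
     (forall x, c_minus a b <= x <= c_plus a b -> delta_ab a b <= f x) ->
     forall x, c_minus a b <= x <= c_plus a b ->
       Rabs (a ^ 2 - b ^ 2) <= Delta_ab a b * f x) /\
  Rabs (a ^ 2 - b ^ 2) <= Delta_ab a b * sqrt (1 - c ^ 2) /\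
  (* (ii) *)
  (forall g : R -> R,
     (forall x, c_minus a b <= x <= c_plus a b -> sqrt (1 - c_plus a b) <= g x) ->
     forall x, c_minus a b <= x <= c_plus a b ->
       Rabs (a - b) <= sqrt (1 - c_minus a b) * g x) /\
  Rabs (a - b) <= sqrt (1 - c_minus a b) * sqrt (1 - c) /\
  (* (iii) *)
  (0 <= a <= 1 -> 0 <= b <= 1 -> 0 <= c <= 1 -> Rabs (a - b) <= sqrt (1 - c ^ 2)).
Proof.
  pose proof (psd3_a_sq_le_1 _ _ _ HB) as Ha.
  pose proof (psd3_b_sq_le_1 _ _ _ HB) as Hb.
  pose proof (psd3_between_c_minus_c_plus _ _ _ HB) as Hc.
  pose proof (Delta_ab_mul_delta_ab _ _ Ha Hb) as HDd.
  pose proof (Rabs_sub_eq_sqrt_mul _ _ Ha Hb) as Hab.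
  split; [| split; [| split; [| split]]].
  - intros f Hf x Hx; rewrite <- HDd.
    apply Rmult_le_compat_l; [apply Delta_ab_ge0 | auto].
  - rewrite <- HDd; apply Rmult_le_compat_l; [apply Delta_ab_ge0 |].
    apply Rmin_sqrt_one_sub_sq_le, Hc.
  - intros g Hg x Hx; rewrite Hab.
    apply Rmult_le_compat_l; [apply sqrt_pos | auto].
  - rewrite Hab; apply Rmult_le_compat_l; [apply sqrt_pos |].
    apply sqrt_le_1_alt; lra.
  - intros [Ha0 _] [Hb0 _] [_ Hc1]; apply (psd3_Rabs_sub_le _ _ _ HB); assumption.
Qed.
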